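(* Let $U$ take values in a finite set $\mathcal{U}$ with $|\mathcal{U}|=L\ge2$ and let $Q$ take values in a finite alphabet. Then \[K^{(L)}(U|Q)\le1-\frac{2}{L-1}P_e^{(L)}(U|Q).\]
   Context: With $P_Q$ and $P_{U|Q}$ the marginal and conditional laws: $K^{(L)}(U|Q)=\sum_q\sum_{u'\ne u}\frac{P_Q(q)}{L-1}\cdot\frac{|P_{U|Q}(u|q)-P_{U|Q}(u'|q)|}{2}$, where the inner sum ranges over ordered pairs $(u,u')\in\mathcal{U}^2$ with $u'\ne u$; and $P_e^{(L)}(U|Q)=\sum_qP_Q(q)\big(1-\max_uP_{U|Q}(u|q)\big)$. *)

From HB Require Import structures.
From mathcomp Require Import all_boot all_order all_algebra.
Set Implicit Arguments. Unset Strict Implicit. Unset Printing Implicit Defensive.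
Import Order.TTheory GRing.Theory Num.Theory.
Local Open Scope ring_scope.

Definition is_joint_pmf (R : realFieldType) (U Q : finType) (P : U -> Q -> R) :=
  (forall u q, 0 <= P u q) /\ \sum_(u : U) \sum_(q : Q) P u q = 1.

Definition PQ (R : realFieldType) (U Q : finType) (P : U -> Q -> R) (q : Q) : R :=
  \sum_(u : U) P u q.

(* conditional law of U given Q (set to 0 when P_Q(q) = 0; such q carry
   weight P_Q(q) = 0 in every formula below) *)
Definition PUgQ (R : realFieldType) (U Q : finType) (P : U -> Q -> R) (u : U) (q : Q) : R :=
  P u q / PQ P q.

Definition KL (R : realFieldType) (U Q : finType) (P : U -> Q -> R) : R :=
  \sum_(q : Q) \sum_(u : U) \sum_(u' : U | u' != u)
     (PQ P q / (#|U|%:R - 1)) * (`|PUgQ P u q - PUgQ P u' q| / 2).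

(* P_e^{(L)}(U|Q); the max of the (nonnegative) conditional probabilities
   is taken as \big[Num.max/0] over the nonempty set U *)
Definition PeL (R : realFieldType) (U Q : finType) (P : U -> Q -> R) : R :=
  \sum_(q : Q) PQ P q * (1 - \big[Num.max/0]_(u : U) PUgQ P u q).

(* For a probability vector c on a set of L points, |a - b| / 2 = (a + b) / 2 - min(a, b).
   Summed over the L (L - 1) ordered pairs, the (a + b) / 2 terms contribute exactly L - 1,
   while the 2 (L - 1) pairs containing a maximizer m of c already contribute
   2 (1 - c m) to the sum of the minima. Hence the pairwise half-distances sum to at
   most L - 1 - 2 (1 - max c); weighting by P_Q(q) / (L - 1) and summing over q gives
   the bound. *)

From mathcomp Require Import all_boot all_order all_algebra.
From mathcomp Require Import ring lra.
Import Order.TTheory GRing.Theory Num.Theory.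
Local Open Scope ring_scope.

Lemma half_distrE (R : realFieldType) (a b : R) :
  `|a - b| / 2 = (a + b) / 2 - Num.min a b.
Proof.
have [le_ab|lt_ba] := leP a b.
- by rewrite ler0_norm ?subr_le0 //; lra.
- by rewrite gtr0_norm ?subr_gt0 //; lra.
Qed.

Section PairwiseHalfDistances.

Context {R : realFieldType} {U : finType} {c : U -> R}.
Hypotheses (c_ge0 : forall u, 0 <= c u) (c_sum1 : \sum_u c u = 1).

Lemma sum_pmf_neq (u : U) : \sum_(v | v != u) c v = 1 - c u.
Proof. by rewrite -c_sum1 [in RHS](bigD1 u) //=; ring. Qed.

Lemma sum_pairs_mean :
  \sum_u \sum_(v | v != u) (c u + c v) / 2 = #|U|%:R - 1.
Proof.
have row_sum u : \sum_(v | v != u) (c u + c v) / 2 = ((#|U|%:R - 2) * c u + 1) / 2.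
  rewrite -mulr_suml big_split /= sumr_const sum_pmf_neq cardC1 -mulr_natr.
  have U_gt0 : (0 < #|U|)%N by apply/card_gt0P; exists u.
  have -> : #|U|%:R = #|U|.-1%:R + 1 :> R by rewrite -[in LHS](prednK U_gt0) -natr1.
  lra.
rewrite (eq_bigr _ (fun u _ => row_sum u)) -mulr_suml big_split /=.
rewrite sumr_const -mulr_sumr c_sum1 (eq_card (fun=> erefl) : #|xpredT| = #|U|).
lra.
Qed.

Lemma sum_pairs_min_ge (m : U) : (forall u, c u <= c m) ->
  2 * (1 - c m) <= \sum_u \sum_(v | v != u) Num.min (c u) (c v).
Proof.
move=> c_le_m; rewrite (bigD1 m) //=.
have row_m : \sum_(v | v != m) Num.min (c m) (c v) = 1 - c m.
  by rewrite -sum_pmf_neq; apply: eq_bigr => v _; rewrite min_r.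
have col_m : 1 - c m <= \sum_(u | u != m) \sum_(v | v != u) Num.min (c u) (c v).
  rewrite -sum_pmf_neq; apply: ler_sum => u u_neq_m.
  rewrite (bigD1 m) 1?eq_sym //= min_l // lerDl.
  by apply: sumr_ge0 => v _; rewrite le_min !c_ge0.
lra.
Qed.

Lemma sum_pairs_half_dist_le :
  \sum_u \sum_(v | v != u) `|c u - c v| / 2
    <= (#|U|%:R - 1) - 2 * (1 - \big[Num.max/0]_u c u).
Proof.
have [j _] : exists j : U, true.
  case: (pickP (fun _ : U => true)) => [j _|U0]; first by exists j.
  by move: c_sum1; rewrite big_pred0 // => /eqP; rewrite eq_sym oner_eq0.
have [m _ max_m] := @eq_bigmax _ _ U 0 j xpredT c isT (fun u _ => c_ge0 u).
have c_le_m u : c u <= c m by rewrite -max_m; apply: le_bigmax.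
under eq_bigr => u _ do under eq_bigr => v _ do rewrite half_distrE.
under eq_bigr => u _ do rewrite sumrB.
rewrite sumrB sum_pairs_mean max_m.
by have := sum_pairs_min_ge m c_le_m; lra.
Qed.

End PairwiseHalfDistances.

Section ConditionalLaw.

Context {R : realFieldType} {U Q : finType} {P : U -> Q -> R}.
Hypothesis P_pmf : is_joint_pmf P.

Lemma PQ_ge0 (q : Q) : 0 <= PQ P q.
Proof. by apply: sumr_ge0 => u _; case: P_pmf. Qed.

Lemma sum_PQ : \sum_q PQ P q = 1.
Proof. by rewrite /PQ exchange_big; case: P_pmf. Qed.

Lemma PUgQ_ge0 (u : U) (q : Q) : 0 <= PUgQ P u q.
Proof. by apply: divr_ge0; [case: P_pmf | exact: PQ_ge0]. Qed.

Lemma sum_PUgQ (q : Q) : PQ P q != 0 -> \sum_u PUgQ P u q = 1.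
Proof. by move=> PQ_neq0; rewrite /PUgQ -mulr_suml divff. Qed.

End ConditionalLaw.

Theorem lemma10 (R : realFieldType) (U Q : finType) (P : U -> Q -> R) :
  is_joint_pmf P -> (2 <= #|U|)%N ->
  KL P <= 1 - 2 / (#|U|%:R - 1) * PeL P.
Proof.
move=> P_pmf U_ge2.
have L1_gt0 : 0 < #|U|%:R - 1 :> R by rewrite subr_gt0 ltr1n.
rewrite /KL /PeL -[X in _ <= X - _](sum_PQ P_pmf) mulr_sumr -sumrB; apply: ler_sum => q _.
under eq_bigr do rewrite -mulr_sumr; rewrite -mulr_sumr.
have [PQ_eq0|PQ_neq0] := eqVneq (PQ P q) 0.
  by rewrite PQ_eq0 !mul0r mulr0 subrr.
have weight_ge0 : 0 <= PQ P q / (#|U|%:R - 1).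
  by rewrite divr_ge0 ?PQ_ge0 ?ltW.
apply: le_trans (ler_wpM2l weight_ge0 (sum_pairs_half_dist_le
  (PUgQ_ge0 P_pmf ^~ q) (sum_PUgQ q PQ_neq0))) _.
by rewrite le_eqVlt predU1l //; field; rewrite lt0r_neq0.
Qed.
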